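(* Let $r\ge 1$ be an integer and let $G$ be an $r$-regular finite simple graph of order $n$. Then $$\gamma_{st}(G)=2\,\gamma_{\times\lceil (r+1)/2\rceil,t}(G)-n,$$ and, if moreover $r\ge 2$, $$\alpha^{2}_{st}(G)=n-2\,\gamma_{\times\lfloor r/2\rfloor,t}(G).$$
   Context: For a vertex $v$ of a graph $G=(V,E)$, $N(v)$ is its open neighborhood, and for $f:V\to\mathbb{R}$ and $B\subseteq V$ write $f(B)=\sum_{v\in B}f(v)$; $f(V)$ is the weight of $f$. A signed total dominating function is a function $f:V\to\{-1,1\}$ with $f(N(v))\ge 1$ for all $v\in V$; $\gamma_{st}(G)$ is the minimum weight of such a function. A signed total $2$-independence function is a function $f:V\to\{-1,1\}$ with $f(N(v))\le 1$ for all $v\in V$; $\alpha^{2}_{st}(G)$ is the maximum weight of such a function. For an integer $1\le k\le \delta(G)$, a $k$-tuple total dominating set of $G$ is a set $D\subseteq V$ with $|N(v)\cap D|\ge k$ for all $v\in V$; $\gamma_{\times k,t}(G)$ is the minimum cardinality of a $k$-tuple total dominating set. *)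

From HB Require Import structures.
From mathcomp Require Import all_boot all_order all_algebra.
Set Implicit Arguments. Unset Strict Implicit. Unset Printing Implicit Defensive.
Import Order.TTheory GRing.Theory Num.Theory.

(* A finite simple graph: vertex type T : finType, adjacency e : rel T,
   assumed symmetric and irreflexive (hypotheses in the theorem).
   Open neighborhood N(v) = [set u | e v u]. *)
Definition nbhd (T : finType) (e : rel T) (v : T) : {set T} := [set u | e v u].

Local Open Scope ring_scope.

Definition signed (T : finType) (f : T -> int) : Prop :=
  forall v, f v = 1 \/ f v = -1.

Definition fsum (T : finType) (f : T -> int) (B : {set T}) : int :=
  \sum_(v in B) f v.
Definition weight (T : finType) (f : T -> int) : int := \sum_(v : T) f v.

Definition STDF (T : finType) (e : rel T) (f : T -> int) : Prop :=
  signed f /\ forall v, 1 <= fsum f (nbhd e v).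

Definition ST2IF (T : finType) (e : rel T) (f : T -> int) : Prop :=
  signed f /\ forall v, fsum f (nbhd e v) <= 1.

Definition is_gamma_st (T : finType) (e : rel T) (g : int) : Prop :=
  (exists f, STDF e f /\ weight f = g) /\ (forall f, STDF e f -> g <= weight f).

Definition is_alpha2_st (T : finType) (e : rel T) (a : int) : Prop :=
  (exists f, ST2IF e f /\ weight f = a) /\ (forall f, ST2IF e f -> weight f <= a).

Local Close Scope ring_scope.

Definition ktuple_tds (T : finType) (e : rel T) (k : nat) (D : {set T}) : bool :=
  [forall v, k <= #|nbhd e v :&: D|].

(* gamma_{x k, t}(G): minimum cardinality of a k-tuple total dominating set
   (the default #|T| is irrelevant whenever such a set exists, e.g. 1 <= k <= delta). *)
Definition gamma_kt (T : finType) (e : rel T) (k : nat) : nat :=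
  \big[minn/#|T|]_(D : {set T} | ktuple_tds e k D) #|D|.

From HB Require Import structures.
From mathcomp Require Import all_boot all_order all_algebra zify.
Import Order.TTheory GRing.Theory Num.Theory.

(* A {-1,1}-valued function is determined by the set D of vertices where it
   is 1, and then f(B) = 2|B ∩ D| - |B|.  On an r-regular graph this turns
   f(N(v)) >= 1 into |N(v) ∩ D| >= ⌈(r+1)/2⌉ and f(N(v)) <= 1 into
   |N(v) \ D| >= ⌊r/2⌋, so minimising (maximising) the weight 2|D| - n of such
   an f amounts to minimising |D| (|V \ D|) over k-tuple total dominating
   sets. *)

Local Open Scope ring_scope.

Section SignedFunctions.
Context {T : finType}.

Definition sign_of (D : {set T}) (v : T) : int := if v \in D then 1 else -1.

Definition pos_set (f : T -> int) : {set T} := [set v | f v == 1].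

Lemma signed_sign_of D : signed (sign_of D).
Proof. by move=> v; rewrite /sign_of; case: (v \in D); [left | right]. Qed.

Lemma pos_set_sign_of D : pos_set (sign_of D) = D.
Proof. by apply/setP => v; rewrite inE /sign_of; case: (v \in D). Qed.

Lemma fsum_signed f B :
  signed f -> fsum f B = 2 * #|B :&: pos_set f|%:Z - #|B|%:Z.
Proof.
move=> sf; rewrite /fsum.
have -> : \sum_(v in B) f v = \sum_(v in B) (2 * (v \in pos_set f)%:R - 1).
  by apply: eq_bigr => v _; rewrite inE; case: (sf v) => ->.
rewrite sumrB sumr_const -mulr_sumr -natr_sum natz.
have -> : (\sum_(v in B) (v \in pos_set f : nat))%N = #|B :&: pos_set f|.
  rewrite -sum1_card [RHS]big_mkcond [LHS]big_mkcond /=.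
  by apply: eq_bigr => v _; rewrite !inE; case: (v \in B).
by rewrite !natz.
Qed.

Lemma weight_signed f : signed f -> weight f = 2 * #|pos_set f|%:Z - #|T|%:Z.
Proof.
move=> sf; rewrite /weight.
have -> : \sum_v f v = fsum f setT by apply: eq_bigl => v; rewrite inE.
by rewrite fsum_signed // setTI cardsT.
Qed.

End SignedFunctions.

Section KTupleDomination.
Variables (T : finType) (e : rel T).

Lemma gamma_kt_le k D :
  ktuple_tds e k D -> (gamma_kt e k <= #|D|)%N.
Proof.
by move=> kD; rewrite /gamma_kt -Order.NatOrder.minEnat;
  exact: (bigmin_le_cond _ (fun D : {set T} => #|D|) kD).
Qed.

Lemma gamma_kt_attained k :
  ktuple_tds e k setT -> exists2 D, ktuple_tds e k D & #|D| = gamma_kt e k.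
Proof.
move=> kT; rewrite /gamma_kt -Order.NatOrder.minEnat.
have [D kD ->] := eq_bigmin _ _ (fun D : {set T} => #|D|) kT
  (fun D _ => max_card D).
by exists D.
Qed.

Section RegularGraph.
Variable r : nat.
Hypothesis regular : forall v : T, #|nbhd e v| = r.

Lemma ktuple_tds_setT k : (k <= r)%N -> ktuple_tds e k setT.
Proof. by move=> kr; apply/forallP => v; rewrite setIT regular. Qed.

Lemma STDF_signedE f :
  signed f -> STDF e f <-> ktuple_tds e ((r + 2) %/ 2) (pos_set f).
Proof.
move=> sf; split=> [[_ dom] | /forallP kD].
  apply/forallP => v; move: (dom v); rewrite fsum_signed // regular; lia.
by split=> // v; move: (kD v); rewrite fsum_signed // regular; lia.
Qed.

Lemma ST2IF_signedE f :
  signed f -> ST2IF e f <-> ktuple_tds e (r %/ 2) (~: pos_set f).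
Proof.
move=> sf.
have cardC v : #|nbhd e v :&: ~: pos_set f| = (r - #|nbhd e v :&: pos_set f|)%N.
  by rewrite -setDE -(regular v) -(cardsID (pos_set f) (nbhd e v)) addKn.
have capr v : (#|nbhd e v :&: pos_set f| <= r)%N.
  by rewrite -(regular v) subset_leq_card ?subsetIl.
split=> [[_ indep] | /forallP kD].
  apply/forallP => v; move: (indep v) (capr v).
  by rewrite fsum_signed // regular cardC; lia.
split=> // v; move: (kD v) (capr v).
by rewrite fsum_signed // regular cardC; lia.
Qed.

Lemma is_gamma_st_regular (r_gt0 : (1 <= r)%N) :
  is_gamma_st e (2 * (gamma_kt e ((r + 2) %/ 2))%:Z - #|T|%:Z).
Proof.
have kr : ((r + 2) %/ 2 <= r)%N by lia.
have [D kD cardD] := gamma_kt_attained _ (ktuple_tds_setT _ kr).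
split=> [|f stdf].
  exists (sign_of D); have sD := signed_sign_of D.
  by rewrite (STDF_signedE _ sD) weight_signed // pos_set_sign_of cardD.
have sf := stdf.1; rewrite weight_signed //.
have := gamma_kt_le _ _ ((STDF_signedE _ sf).1 stdf); lia.
Qed.

Lemma is_alpha2_st_regular :
  is_alpha2_st e (#|T|%:Z - 2 * (gamma_kt e (r %/ 2))%:Z).
Proof.
have [D kD cardD] := gamma_kt_attained _ (ktuple_tds_setT _ (leq_div r 2)).
have cardC (A : {set T}) : #|~: A| = (#|T| - #|A|)%N by rewrite cardsCs setCK.
have cardA (A : {set T}) : (#|A| <= #|T|)%N := max_card A.
split=> [|f st2if].
  exists (sign_of (~: D)); have sD := signed_sign_of (~: D).
  rewrite (ST2IF_signedE _ sD) weight_signed // pos_set_sign_of setCK cardC.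
  by split=> //; move: (cardA D); rewrite cardD; lia.
have sf := st2if.1; rewrite weight_signed //.
have := gamma_kt_le _ _ ((ST2IF_signedE _ sf).1 st2if).
by move: (cardA (pos_set f)); rewrite cardC; lia.
Qed.

End RegularGraph.
End KTupleDomination.

Theorem mainTheorem6 (T : finType) (e : rel T) (r : nat)
  (esym : symmetric e) (eirr : irreflexive e) (hr : (1 <= r)%N)
  (hreg : forall v : T, #|nbhd e v| = r) :
  is_gamma_st e (2 * (gamma_kt e ((r + 2) %/ 2))%:Z - (#|T|)%:Z)
  /\ ((2 <= r)%N -> is_alpha2_st e ((#|T|)%:Z - 2 * (gamma_kt e (r %/ 2))%:Z)).
Proof.
(* Only the neighbourhood sizes matter. *)
split; first exact: is_gamma_st_regular.
by move=> _; exact: is_alpha2_st_regular.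
Qed.
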